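(* Let $n \ge 4$ and let $\frac{a_1}{b_1} < \frac{a_2}{b_2} < \cdots$ be the Farey sequence of order $n$. Let $f(n)$ be the largest integer such that $(a_l - a_k)(b_l - b_k) \ge 0$ for all indices $k, l$ with $|l-k| \le f(n)$. Then $$f(n) \le \left\lfloor \frac{n}{4} \right\rfloor + d,$$ where $d = 1, 2, 2, 4$ according as $n \equiv 0, 1, 2, 3 \pmod 4$.
   Context: The Farey sequence of order $n$ is the increasing list of all reduced fractions $\frac{a}{b}$ with $0 \le \frac{a}{b} \le 1$ and $1 \le b \le n$ (including $\frac01$ and $\frac11$), each written in lowest terms. Two fractions $\frac{a}{b}, \frac{a'}{b'}$ (in lowest terms) are called similarly ordered if $(a'-a)(b'-b) \ge 0$. For $n \ge 4$ the Farey sequence of order $n$ contains two fractions that are not similarly ordered, so $f(n)$ is well defined. *)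

From mathcomp Require Import all_boot all_order all_algebra.
Set Implicit Arguments. Unset Strict Implicit. Unset Printing Implicit Defensive.
Import Order.TTheory GRing.Theory Num.Theory.

(* A fraction a/b is represented by the pair (a, b). *)

Definition farey (n : nat) : seq (nat * nat) :=
  sort (fun x y : nat * nat => x.1 * y.2 <= y.1 * x.2)
    [seq ab <- flatten [seq [seq (a, b) | a <- iota 0 b.+1] | b <- iota 1 n]
       | coprime ab.1 ab.2].

Definition sim_ordered (x y : nat * nat) : bool :=
  (0 <= (y.1%:Z - x.1%:Z) * (y.2%:Z - x.2%:Z))%R.

Definition window_ok (n m : nat) : bool :=
  let F := farey n in
  [forall k : 'I_(size F), forall l : 'I_(size F),
     ((l - k <= m) && (k - l <= m)) ==>
       sim_ordered (nth (0, 1) F k) (nth (0, 1) F l)].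

(* For n >= 4 window_ok n m fails for
   every m >= size (farey n) - 1 (some pair is not similarly ordered), so the
   maximum over m < size (farey n) is the true largest such integer. *)
Definition f (n : nat) : nat :=
  \max_(m < size (farey n) | window_ok n m) m.

Definition dfarey (n : nat) : nat :=
  match n %% 4 with 0 => 1 | 1 => 2 | 2 => 2 | _ => 4 end.

From mathcomp Require Import all_boot all_order all_algebra.
From mathcomp Require Import zify.
Import Order.TTheory Num.Theory.

(* Two Farey fractions x = a/b < y = c/d with a < c and d < b are not
   similarly ordered, so f(n) is smaller than the difference of their
   positions, which is the number of Farey fractions in [x, y).  For
   n = 4k+4 take x = (2k+1)/(4k+4), y = (2k+2)/(4k+3); for n = 4m+r with
   r = 1, 2, 3 take x = 2m/(4m+1), y = (2m+1)/(4m).  In both cases a reduced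
   fraction of [x, y) with denominator at most n is x, 1/2 or of the form
   a/(2a+1), resp. a/(2a-1), apart from two fractions of denominator 4m+3
   when r = 3; counting them gives the bound.  For n = 7 the pair 1/6, 2/5
   is checked by computation. *)

Definition frac_lt (x y : nat * nat) : bool := x.1 * y.2 < y.1 * x.2.

Lemma mem_farey n z :
  (z \in farey n) = [&& coprime z.1 z.2, 0 < z.2 <= n & z.1 <= z.2].
Proof.
rewrite /farey mem_sort mem_filter; case: z => a b; case: coprime => //.
rewrite !andTb.
apply/flatten_mapP/andP => [[b' b'n /mapP [a' a'b' [-> ->]]] | [bn ab]].
  by move: b'n a'b'; rewrite !mem_iota !ltnS => -> /andP [_ ->].
exists b; first by rewrite mem_iota add1n ltnS.
by apply/mapP; exists a; rewrite // mem_iota ltnS.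
Qed.

Lemma uniq_farey n : uniq (farey n).
Proof.
rewrite sort_uniq filter_uniq // allpairs_uniq_dep ?iota_uniq // => [b _|].
  exact: iota_uniq.
by case=> [b a] [b' a'] _ _ [-> ->].
Qed.

Lemma frac_lt_asym x y : frac_lt x y -> ~~ frac_lt y x.
Proof. by rewrite /frac_lt -leqNgt => /ltnW. Qed.

Lemma frac_lt_trans y x z :
  0 < x.2 -> frac_lt x y -> frac_lt y z -> frac_lt x z.
Proof. rewrite /frac_lt => x2 xy yz; nia. Qed.

Lemma frac_eq_farey n x y : x \in farey n -> y \in farey n ->
  x.1 * y.2 = y.1 * x.2 -> x = y.
Proof.
rewrite !mem_farey; case: x => a b; case: y => c d /=.
move=> /and3P [cab /andP [b0 _] _] /and3P [ccd /andP [d0 _] _] E.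
have bd : b %| d by rewrite -(@Gauss_dvdr _ a) 1?coprime_sym // E dvdn_mull.
have db : d %| b by rewrite -(@Gauss_dvdr _ c) 1?coprime_sym // -E dvdn_mull.
have {bd db} Ebd : b = d by apply/eqP; rewrite eqn_dvd bd.
by move: E; rewrite {}Ebd => /eqP; rewrite eqn_pmul2r // => /eqP ->.
Qed.

Lemma farey_den_gt0 n z : z \in farey n -> 0 < z.2.
Proof. by rewrite mem_farey => /and3P [_ /andP []]. Qed.

Lemma pairwise_farey n : pairwise frac_lt (farey n).
Proof.
pose le (x y : nat * nat) := x.1 * y.2 <= y.1 * x.2.
have le_trans : {in farey n & &, transitive le}.
  move=> [c d] [a b] [e g] /farey_den_gt0 /= d0 _ _; rewrite /le /= => h1 h2.
  by rewrite -(leq_pmul2r d0); nia.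
have : pairwise [rel x y | (x != y) && le x y] (farey n).
  rewrite pairwise_relI -uniq_pairwise uniq_farey.
  rewrite -(sorted_pairwise_in le_trans) ?allss //.
  by apply: sort_sorted => x y; exact: leq_total.
apply: sub_in_pairwise (allss _) => x y xF yF /andP [xy lexy].
rewrite /frac_lt ltn_neqAle [_ <= _]lexy andbT.
by apply: contra xy => /eqP /(@frac_eq_farey n x y xF yF) ->.
Qed.

Lemma index_pairwise {T : eqType} {r : rel T} {s : seq T} {x : T} :
  (forall y z, r y z -> ~~ r z y) -> pairwise r s -> x \in s ->
  index x s = count (r^~ x) s.
Proof.
move=> asym; elim: s => //= y s IHs /andP [rys rs]; rewrite inE.
have [<- _ | yx /= xs] := eqVneq y x; last by rewrite IHs // (allP rys).
have /negbTE -> : ~~ r y y.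
  by apply/negP => ryy; move: (asym _ _ ryy); rewrite ryy.
rewrite (eq_in_count (a2 := pred0)) ?count_pred0 // => z zs.
by apply/negbTE/asym; move/allP: rys; apply.
Qed.

Lemma count_split_subpred (T : eqType) (a1 a2 : pred T) (s : seq T) :
  {in s, forall z, a1 z -> a2 z} ->
  count a2 s = count a1 s + count (fun z => ~~ a1 z && a2 z) s.
Proof.
elim: s => //= z s IHs a12.
rewrite IHs => [|w ws]; last by apply: a12; rewrite inE ws orbT.
case a1z: (a1 z); last by case: (a2 z) => /=; lia.
by rewrite (a12 z (mem_head z s) a1z) /=; lia.
Qed.

Lemma index_farey_between {n : nat} {x y : nat * nat} :
  x \in farey n -> y \in farey n -> frac_lt x y ->
  index y (farey n) =
  index x (farey n) + count (fun z => ~~ frac_lt z x && frac_lt z y) (farey n).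
Proof.
move=> xF yF xy; rewrite !(index_pairwise frac_lt_asym (pairwise_farey n)) //.
apply: count_split_subpred => z /farey_den_gt0 z2 zx.
exact: frac_lt_trans xy.
Qed.

Lemma window_ok_sim_ordered n m x y : window_ok n m ->
  x \in farey n -> y \in farey n ->
  index x (farey n) <= index y (farey n) <= index x (farey n) + m ->
  sim_ordered x y.
Proof.
move=> win xF yF /andP [xy ym].
rewrite -index_mem in xF; rewrite -index_mem in yF.
move/forallP/(_ (Ordinal xF))/forallP/(_ (Ordinal yF))/implyP: win.
rewrite /= !nth_index -?index_mem //; apply; lia.
Qed.

Lemma sim_orderedN {x y : nat * nat} :
  x.1 < y.1 -> y.2 < x.2 -> ~~ sim_ordered x y.
Proof.
move=> lt1 lt2; rewrite /sim_ordered -ltNge pmulr_rlt0 ?subr_gt0 ?ltz_nat //.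
by rewrite subr_lt0 ltz_nat.
Qed.

Lemma f_leq_crossing_pair n x y (L : seq (nat * nat)) M :
  x \in farey n -> y \in farey n -> x.1 < y.1 -> y.2 < x.2 ->
  {in farey n, forall z, ~~ frac_lt z x -> frac_lt z y -> z \in L} ->
  size L <= M.+1 -> f n <= M.
Proof.
move=> xF yF lt1 lt2 betweenL sizeL.
have xy : frac_lt x y.
  by rewrite /frac_lt; move: x.1 x.2 y.1 y.2 lt1 lt2 => a b c d ? ?; nia.
have between_size :
    count (fun z => ~~ frac_lt z x && frac_lt z y) (farey n) <= size L.
  rewrite -size_filter; apply: uniq_leq_size.
    by rewrite filter_uniq ?uniq_farey.
  by move=> z; rewrite mem_filter => /andP [/andP [zx zy] zF]; apply: betweenL.
apply/bigmax_leqP => m /window_ok_sim_ordered win.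
rewrite leqNgt; apply/negP => Mm.
have idx := index_farey_between xF yF xy.
suff : sim_ordered x y by rewrite (negbTE (sim_orderedN lt1 lt2)).
by apply: win => //; lia.
Qed.

Lemma between_mod0 k a b : coprime a b -> b <= 4 * k + 4 ->
  (2 * k + 1) * b <= a * (4 * k + 4) -> a * (4 * k + 3) < (2 * k + 2) * b ->
  [\/ (a, b) = (2 * k + 1, 4 * k + 4), (a, b) = (1, 2)
    | k < a <= 2 * k + 1 /\ b = 2 * a + 1].
Proof.
move=> cop bn xz zy.
have ab : 2 * a <= b <= 2 * a + 2 by clear cop; apply/andP; split; nia.
have [Eb|[Eb|Eb]] : b = 2 * a \/ b = 2 * a + 1 \/ b = 2 * a + 2 by lia.
- by move: cop; rewrite Eb /coprime gcdnMl => /eqP ->; constructor 2.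
- by constructor 3; nia.
- by constructor 1; congr pair; nia.
Qed.

Lemma f_leq_mod0 k : f (4 * k + 4) <= k + 2.
Proof.
pose L := [:: (2 * k + 1, 4 * k + 4); (1, 2)]
  ++ [seq (a, 2 * a + 1) | a <- iota k.+1 k.+1].
apply: (@f_leq_crossing_pair _ (2 * k + 1, 4 * k + 4) (2 * k + 2, 4 * k + 3) L).
- rewrite mem_farey /=; apply/and3P; split; try lia.
  by apply/coprimeP; [lia | exists (2 * k + 1, k) => /=; nia].
- rewrite mem_farey /=; apply/and3P; split; try lia.
  by apply/coprimeP; [lia | exists (2, 1) => /=; nia].
- rewrite /=; lia.
- rewrite /=; lia.
- move=> [a b]; rewrite mem_farey /frac_lt -leqNgt.
  move=> /and3P [cop /andP [_ bn] _] xz zy.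
  rewrite mem_cat; have [->|->|[ka ->]] := between_mod0 k a b cop bn xz zy.
  + by rewrite mem_head.
  + by rewrite !inE eqxx orbT.
  + by apply/orP; right; apply/mapP; exists a; rewrite // mem_iota; lia.
- by rewrite size_cat size_map size_iota /=; lia.
Qed.

Lemma between_mod123 m a b : 0 < m -> coprime a b -> b <= 4 * m + 3 ->
  (b = 4 * m + 3 -> 1 < m) ->
  2 * m * b <= a * (4 * m + 1) -> a * (4 * m) < (2 * m + 1) * b ->
  [\/ (a, b) = (2 * m, 4 * m + 1), (a, b) = (1, 2),
      m < a <= 2 * m + 1 /\ b = 2 * a - 1
    | b = 4 * m + 3 /\ (a = 2 * m + 1 \/ a = 2 * m + 2)].
Proof.
move=> m0 cop bn bm xz zy.
have ab : 2 * a <= b + 2 <= 2 * a + 3.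
  clear cop; apply/andP; split; last nia.
  have [Eb|/eqP nb] := eqVneq b (4 * m + 3); last nia.
  by have := bm Eb; nia.
have [Eb|[Eb|[Eb|Eb]]] :
  b = 2 * a \/ b = 2 * a + 1 \/ b + 1 = 2 * a \/ b + 2 = 2 * a by lia.
- by move: cop; rewrite Eb /coprime gcdnMl => /eqP ->; constructor 2.
- have [Ea|Ea] : a = 2 * m \/ a = 2 * m + 1 by clear cop; nia.
    by constructor 1; congr pair; lia.
  by constructor 4; split; lia.
- have [am|Ea] : a <= 2 * m + 1 \/ a = 2 * m + 2 by clear cop; nia.
    by constructor 3; split; [nia | lia].
  by constructor 4; split; lia.
- have [Ea Eb'] : a = 2 * (m + 1) /\ b = 2 * (2 * m + 1) by clear cop; nia.
  by move: cop; rewrite Ea Eb' coprimeMl coprimeMr.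
Qed.

Lemma f_leq_mod123 m r : 0 < m -> 0 < r <= 3 -> (r = 3 -> 1 < m) ->
  f (4 * m + r) <= m + (if r == 3 then 4 else 2).
Proof.
move=> m0 r13 rm.
pose L := [:: (2 * m, 4 * m + 1); (1, 2)]
  ++ [seq (a, 2 * a - 1) | a <- iota m.+1 m.+1]
  ++ (if r == 3 then [:: (2 * m + 1, 4 * m + 3); (2 * m + 2, 4 * m + 3)]
      else [::]).
apply: (@f_leq_crossing_pair _ (2 * m, 4 * m + 1) (2 * m + 1, 4 * m) L).
- rewrite mem_farey /=; apply/and3P; split; try lia.
  by rewrite coprime_sym; apply/coprimeP; [lia | exists (1, 2) => /=; nia].
- rewrite mem_farey /=; apply/and3P; split; try lia.
  by apply/coprimeP; [lia | exists (2 * m + 1, m + 1) => /=; nia].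
- rewrite /=; lia.
- rewrite /=; lia.
- move=> [a b]; rewrite mem_farey /frac_lt -leqNgt.
  move=> /and3P [cop /andP [_ bn] _] xz zy.
  have bn' : b <= 4 * m + 3 by move: bn r13 => /=; lia.
  have bm : b = 4 * m + 3 -> 1 < m.
    by move=> Eb; apply: rm; move: bn r13 => /=; lia.
  rewrite !mem_cat.
  have [->|->|[ma ->]|[Eb Ea]] := between_mod123 m a b m0 cop bn' bm xz zy.
  + by rewrite mem_head.
  + by rewrite !inE eqxx orbT.
  + by apply/or3P; apply: Or32; apply/mapP; exists a; rewrite // mem_iota; lia.
  + have -> : r = 3 by move: bn r13 => /=; lia.
    by rewrite Eb !inE; case: Ea => ->; rewrite eqxx ?orbT.
- by rewrite !size_cat size_map size_iota /=; case: eqP => _ /=; lia.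
Qed.

Lemma f_7 : f 7 <= 5.
Proof.
apply: (@f_leq_crossing_pair 7 (1, 6) (2, 5)
  [seq z <- farey 7 | ~~ frac_lt z (1, 6) && frac_lt z (2, 5)]) => //.
by move=> z zF zx zy; rewrite mem_filter zx zy zF.
Qed.

Theorem theorem1 (n : nat) : 4 <= n -> f n <= n %/ 4 + dfarey n.
Proof.
rewrite /dfarey {1 2}(divn_eq n 4); move: (ltn_pmod n (isT : 0 < 4)).
move: (n %/ 4) (n %% 4) => q [|[|[|[|r]]]] // _ n4.
- have [k ->] : exists k, q = k.+1 by case: q n4 => [|k] //; exists k.
  rewrite (_ : k.+1 * 4 + 0 = 4 * k + 4); last lia.
  by apply: leq_trans (f_leq_mod0 k) _; lia.
- by rewrite mulnC; apply: f_leq_mod123 => //; lia.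
- by rewrite mulnC; apply: f_leq_mod123 => //; lia.
- have [q1|q2] := leqP q 1; last first.
    by rewrite mulnC; apply: f_leq_mod123 => //; lia.
  have -> : q = 1 by lia.
  exact: f_7.
Qed.
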